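(* Let $(\mathfrak{h},\langle\cdot,\cdot\rangle)$ be a Kundt pair on $\mathfrak{sol}$. Then it is equivalent to $(\mathfrak{h}_0,\langle\cdot,\cdot\rangle_0)$ where, with matrices taken in the basis $(X_1,X_2,X_3)$, either (1) $\langle\cdot,\cdot\rangle_0=\begin{pmatrix}\lambda&0&0\\0&0&-1\\0&-1&0\end{pmatrix}$, $\lambda>0$, and $\mathfrak{h}_0=\mathrm{span}\{X_2,X_1\}$ or $\mathfrak{h}_0=\mathrm{span}\{X_3,X_1\}$; (2) $\langle\cdot,\cdot\rangle_0=\begin{pmatrix}\lambda^2&0&0\\0&\lambda&1\\0&1&0\end{pmatrix}$, $\lambda\neq 0$, and $\mathfrak{h}_0=\mathrm{span}\{X_3,X_1\}$; (3) $\langle\cdot,\cdot\rangle_0=\begin{pmatrix}0&0&-\frac{2}{b}\\0&1&1\\-\frac{2}{b}&1&1\end{pmatrix}$, $b>0$, and $\mathfrak{h}_0=\mathrm{span}\{X_2,X_3\}$; or (4) $\langle\cdot,\cdot\rangle_0=\begin{pmatrix}0&0&1\\0&1&0\\1&0&0\end{pmatrix}$ and $\mathfrak{h}_0=\mathrm{span}\{X_2,X_3\}$.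
   Context: $\mathfrak{sol}$ has basis $(X_1,X_2,X_3)$ with only nonzero brackets $[X_1,X_2]=X_2$, $[X_1,X_3]=-X_3$. For a Lorentzian scalar product $\langle\cdot,\cdot\rangle$ on a Lie algebra $\mathfrak{g}$, the Levi-Civita product is defined by $2\langle u\bullet v,w\rangle=\langle[u,v],w\rangle+\langle[w,u],v\rangle+\langle[w,v],u\rangle$. A Kundt pair on $\mathfrak{g}$ is a pair consisting of a Lorentzian scalar product $\langle\cdot,\cdot\rangle$ and a codimension one subalgebra $\mathfrak{h}$ which is $\langle\cdot,\cdot\rangle$-degenerate, stable by $\bullet$, and such that $e\bullet e=0$ for all $e\in\mathfrak{h}^\perp$. Two Kundt pairs $(\mathfrak{h}_1,\langle\cdot,\cdot\rangle_1)$, $(\mathfrak{h}_2,\langle\cdot,\cdot\rangle_2)$ are equivalent if there is a Lie algebra automorphism $\phi$ of $\mathfrak{g}$ with $\phi(\mathfrak{h}_1)=\mathfrak{h}_2$ and $\phi^*\langle\cdot,\cdot\rangle_2=\langle\cdot,\cdot\rangle_1$. *)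

(* The Lie algebra sol = R^3 (row vectors 'rV[R]_3) with
   basis X1 = e_0, X2 = e_1, X3 = e_2.  Scalar products are given by their
   Gram matrix G in this basis; a linear map phi is u |-> u *m A. *)
From HB Require Import structures.
From mathcomp Require Import all_boot all_order all_algebra.
From mathcomp Require Import reals.
Set Implicit Arguments. Unset Strict Implicit. Unset Printing Implicit Defensive.
Import Order.TTheory GRing.Theory Num.Theory.
Local Open Scope ring_scope.

Section Sol.
Variable R : realType.

Definition X1 : 'rV[R]_3 := delta_mx 0 0.
Definition X2 : 'rV[R]_3 := delta_mx 0 1.
Definition X3 : 'rV[R]_3 := delta_mx 0 2.

(* Lie bracket of sol: [X1,X2] = X2, [X1,X3] = -X3, [X2,X3] = 0 *)
Definition sol_br (u v : 'rV[R]_3) : 'rV[R]_3 :=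
  (u 0 0 * v 0 1 - u 0 1 * v 0 0) *: X2 - (u 0 0 * v 0 2 - u 0 2 * v 0 0) *: X3.

Definition sp (G : 'M[R]_3) (u v : 'rV[R]_3) : R := (u *m G *m v^T) 0 0.

Definition lorentzian (G : 'M[R]_3) : Prop :=
  G^T = G /\ exists P : 'M[R]_3, P \in unitmx /\
     P *m G *m P^T = diag_mx (\row_(i < 3) if i == 0 then -1 else 1).

(* w = u • v (Levi-Civita product), characterized by its defining identity *)
Definition is_lc (G : 'M[R]_3) (u v w : 'rV[R]_3) : Prop :=
  forall z : 'rV[R]_3,
    2 * sp G w z = sp G (sol_br u v) z + sp G (sol_br z u) v + sp G (sol_br z v) u.

Definition memh (H : 'M[R]_3) (u : 'rV[R]_3) : Prop := (u <= H)%MS.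

Definition kundt_pair (H G : 'M[R]_3) : Prop :=
  lorentzian G /\ \rank H = 2%N /\
  [/\
      (forall u v, memh H u -> memh H v -> memh H (sol_br u v)),
      (exists u, memh H u /\ u != 0 /\ forall v, memh H v -> sp G u v = 0),
      (forall u v w, memh H u -> memh H v -> is_lc G u v w -> memh H w) &
      (forall e, (forall v, memh H v -> sp G e v = 0) -> is_lc G e e 0)].

Definition sol_aut (A : 'M[R]_3) : Prop :=
  A \in unitmx /\ forall u v, sol_br (u *m A) (v *m A) = sol_br u v *m A.

Definition kundt_equiv (H1 G1 H2 G2 : 'M[R]_3) : Prop :=
  exists A : 'M[R]_3, sol_aut A /\ (H1 *m A == H2)%MS /\ A *m G2 *m A^T = G1.

Definition mx3 (a b c d e f g h i : R) : 'M[R]_3 :=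
  \matrix_(r < 3, s < 3)
    nth 0 (nth [::] [:: [:: a; b; c]; [:: d; e; f]; [:: g; h; i]] r) s.

Definition span2 (x y : 'rV[R]_3) : 'M[R]_3 := col_mx x (col_mx y 0).

End Sol.

(** Write G = (a b c; b d e; c e f) in the basis (X1, X2, X3). Since h is degenerate, the null
   line h^perp is spanned by some u in h, and h is the kernel of the covector n = G u. The
   condition u • u = 0 says that [z, u] is orthogonal to u for every z, i.e.
   u0 n1 = u0 n2 = 0 and u1 n1 = u2 n2, while h being a subalgebra forces n1 n2 = 0. Hence
   u0 = 0 and either h = span{X2, X3} (n1 = n2 = 0, and G restricted to h is degenerate),
   or u ~ X2 (then d = 0), or u ~ X3 (then f = 0). In each case an explicit automorphism of
   sol, sending X1 to +-X1 modulo [sol, sol] and scaling or exchanging X2 and X3, carries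
   (h, G) to one of the four models; det G < 0 gives the sign conditions on the parameters. *)
From HB Require Import structures.
From mathcomp Require Import all_boot all_order all_algebra.
From mathcomp Require Import reals.
From mathcomp Require Import ring lra.
Set Implicit Arguments. Unset Strict Implicit. Unset Printing Implicit Defensive.
Import Order.TTheory GRing.Theory Num.Theory.
Local Open Scope ring_scope.

Ltac case_ord3 i := let Hi := fresh "Hi" in case: i => [[|[|[|i]]] Hi] //=.
Ltac field_nz := field; do ?[apply/andP; split]; rewrite ?pnatr_eq0 //.

Section SolKundt.
Variable R : realType.
Local Notation M3 := (@mx3 R).

Definition r3 (x y z : R) : 'rV[R]_3 := \row_(j < 3) nth 0 [:: x; y; z] j.
Definition c3 (x y z : R) : 'cV[R]_3 := \col_(i < 3) nth 0 [:: x; y; z] i.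

Lemma mx3_eta (M : 'M[R]_3) :
  M = M3 (M 0 0) (M 0 1) (M 0 2) (M 1 0) (M 1 1) (M 1 2) (M 2 0) (M 2 1) (M 2 2).
Proof.
apply/matrixP => i j; rewrite !mxE.
by case_ord3 i; case_ord3 j; congr (M _ _); apply: val_inj.
Qed.

Lemma r3_eta (v : 'rV[R]_3) : v = r3 (v 0 0) (v 0 1) (v 0 2).
Proof.
apply/matrixP => i j; rewrite !mxE ord1.
by case_ord3 j; congr (v _ _); apply: val_inj.
Qed.

Lemma c3_0 : c3 0 0 0 = 0.
Proof. by apply/matrixP => i j; rewrite !mxE; case_ord3 i. Qed.

Lemma X1E : X1 R = r3 1 0 0.
Proof. by apply/matrixP => i j; rewrite !mxE ord1; case_ord3 j. Qed.
Lemma X2E : X2 R = r3 0 1 0.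
Proof. by apply/matrixP => i j; rewrite !mxE ord1; case_ord3 j. Qed.
Lemma X3E : X3 R = r3 0 0 1.
Proof. by apply/matrixP => i j; rewrite !mxE ord1; case_ord3 j. Qed.

Lemma tr_r3 x y z : (r3 x y z)^T = c3 x y z.
Proof. by apply/matrixP => i j; rewrite !mxE. Qed.

Lemma tr_mx3 a1 a2 a3 a4 a5 a6 a7 a8 a9 :
  (M3 a1 a2 a3 a4 a5 a6 a7 a8 a9)^T = M3 a1 a4 a7 a2 a5 a8 a3 a6 a9.
Proof. by apply/matrixP => i j; rewrite !mxE; case_ord3 i; case_ord3 j. Qed.

Lemma scale_c3 k x y z : k *: c3 x y z = c3 (k * x) (k * y) (k * z).
Proof. by apply/matrixP => i j; rewrite !mxE; case_ord3 i. Qed.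

Lemma mul_mx3 a1 a2 a3 a4 a5 a6 a7 a8 a9 b1 b2 b3 b4 b5 b6 b7 b8 b9 :
  M3 a1 a2 a3 a4 a5 a6 a7 a8 a9 *m M3 b1 b2 b3 b4 b5 b6 b7 b8 b9 =
  M3 (a1*b1 + a2*b4 + a3*b7) (a1*b2 + a2*b5 + a3*b8) (a1*b3 + a2*b6 + a3*b9)
     (a4*b1 + a5*b4 + a6*b7) (a4*b2 + a5*b5 + a6*b8) (a4*b3 + a5*b6 + a6*b9)
     (a7*b1 + a8*b4 + a9*b7) (a7*b2 + a8*b5 + a9*b8) (a7*b3 + a8*b6 + a9*b9).
Proof.
apply/matrixP => i j; rewrite !mxE !big_ord_recr big_ord0 /= !mxE /=.
by case_ord3 i; case_ord3 j; ring.
Qed.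

Lemma mul_r3_mx3 x y z a1 a2 a3 a4 a5 a6 a7 a8 a9 :
  r3 x y z *m M3 a1 a2 a3 a4 a5 a6 a7 a8 a9 =
  r3 (x*a1 + y*a4 + z*a7) (x*a2 + y*a5 + z*a8) (x*a3 + y*a6 + z*a9).
Proof.
apply/matrixP => i j; rewrite !mxE !big_ord_recr big_ord0 /= !mxE /=.
by case_ord3 j; ring.
Qed.

Lemma mul_mx3_c3 x y z a1 a2 a3 a4 a5 a6 a7 a8 a9 :
  M3 a1 a2 a3 a4 a5 a6 a7 a8 a9 *m c3 x y z =
  c3 (a1*x + a2*y + a3*z) (a4*x + a5*y + a6*z) (a7*x + a8*y + a9*z).
Proof.
apply/matrixP => i j; rewrite !mxE !big_ord_recr big_ord0 /= !mxE /=.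
by case_ord3 i; ring.
Qed.

Lemma mul_r3_c3 x y z x' y' z' :
  r3 x y z *m c3 x' y' z' = (x*x' + y*y' + z*z')%:M.
Proof.
apply/matrixP => i j; rewrite !mxE !big_ord_recr big_ord0 /= !mxE /= !ord1 /=.
ring.
Qed.

Lemma det_mx3 a1 a2 a3 a4 a5 a6 a7 a8 a9 :
  \det (M3 a1 a2 a3 a4 a5 a6 a7 a8 a9) =
  a1 * (a5*a9 - a6*a8) - a2 * (a4*a9 - a6*a7) + a3 * (a4*a8 - a5*a7).
Proof.
rewrite (expand_det_row _ 0) !big_ord_recr big_ord0 /= /cofactor /=.
rewrite !(expand_det_row _ 0) !big_ord_recr !big_ord0 /= /cofactor /=.
rewrite !det_mx11 !mxE /=; ring.
Qed.

Lemma sol_brE x y z x' y' z' :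
  sol_br (r3 x y z) (r3 x' y' z') = r3 0 (x*y' - y*x') (- (x*z' - z*x')).
Proof.
rewrite /sol_br X2E X3E; apply/matrixP => i j; rewrite !mxE /=.
by case_ord3 j; ring.
Qed.

Lemma span2E x1 x2 x3 y1 y2 y3 :
  span2 (r3 x1 x2 x3) (r3 y1 y2 y3) = M3 x1 x2 x3 y1 y2 y3 0 0 0.
Proof.
apply/matrixP => i j; rewrite !mxE.
case: splitP => k /=; first by rewrite ord1 => ->; rewrite mxE.
move=> ik; rewrite mxE; case: splitP => l /=.
  by rewrite ord1 => kl; rewrite ik kl mxE.
move=> kl; rewrite mxE ik kl /=.
by case: l {kl} => [[|l] Hl] //=; case_ord3 j.
Qed.

Lemma mul_r3_c3_eq0 x y z x' y' z' :
  (r3 x y z *m c3 x' y' z' == 0) = (x*x' + y*y' + z*z' == 0).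
Proof. by rewrite mul_r3_c3 fmorph_eq0. Qed.

Lemma c3_neq0 x y z : (c3 x y z != 0) = [|| x != 0, y != 0 | z != 0].
Proof.
apply/idP/idP => [|nz].
  apply: contraR; rewrite !negb_or !negbK => /and3P[/eqP-> /eqP-> /eqP->].
  by rewrite c3_0.
apply: contraTneq nz => /matrixP N0.
have := N0 0 0; have := N0 1 0; have := N0 2 0; rewrite !mxE /=.
by move=> -> -> ->; rewrite eqxx.
Qed.

Lemma mulmx_scale_col (m : nat) (A : 'M[R]_(m, 3)) (k x y z : R) :
  k != 0 -> A *m c3 (k * x) (k * y) (k * z) = 0 -> A *m c3 x y z = 0.
Proof.
by move=> k0; rewrite -scale_c3 -scalemxAr => /eqP; rewrite scaler_eq0 (negbTE k0) => /eqP.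
Qed.

Lemma sym2_singular_of_kernel (d e f u1 u2 : R) :
  d * u1 + e * u2 = 0 -> e * u1 + f * u2 = 0 -> (u1 != 0) || (u2 != 0) ->
  d * f = e ^+ 2.
Proof.
move=> k1 k2; apply: contraTeq; rewrite -subr_eq0 => D0.
have Du1 : (d * f - e ^+ 2) * u1 = 0.
  have -> : (d * f - e ^+ 2) * u1 = f * (d * u1 + e * u2) - e * (e * u1 + f * u2) by ring.
  by rewrite k1 k2 !mulr0 subrr.
have Du2 : (d * f - e ^+ 2) * u2 = 0.
  have -> : (d * f - e ^+ 2) * u2 = d * (e * u1 + f * u2) - e * (d * u1 + e * u2) by ring.
  by rewrite k1 k2 !mulr0 subrr.
move/eqP: Du1; rewrite mulf_eq0 (negbTE D0) => /eqP->.
by move/eqP: Du2; rewrite mulf_eq0 (negbTE D0) => /eqP->; rewrite eqxx.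
Qed.

Lemma sqr_mul_gt0 (x y : R) : 0 < x ^+ 2 * y -> 0 < y /\ x != 0.
Proof.
move=> xy; have x0 : x != 0 by apply: contraTneq xy => ->; rewrite expr0n mul0r ltxx.
by split=> //; move: xy; rewrite pmulr_rgt0 // exprn_even_gt0.
Qed.

Lemma exists_sqrt_sign (K s : R) : 0 < K -> s != 0 ->
  exists la, la ^+ 2 = K /\ 0 < s * la.
Proof.
move=> K0 s0; have sK : 0 < Num.sqrt K by rewrite sqrtr_gt0.
have [sgt0|sle0] := ltP 0 s.
  by exists (Num.sqrt K); rewrite sqr_sqrtr ?ltW // mulr_gt0.
exists (- Num.sqrt K); rewrite sqrrN sqr_sqrtr ?ltW //; split=> //.
by rewrite mulrN -mulNr mulr_gt0 // oppr_gt0 lt_neqAle s0.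
Qed.

Lemma exists_sqr_scale (K s : R) : 0 < K -> s != 0 ->
  exists la be, [/\ la ^+ 2 = K, la != 0, be != 0 & be ^+ 2 * la = s].
Proof.
move=> K0 s0; have [la [laK sla]] := exists_sqrt_sign K0 s0.
have la0 : la != 0 by apply: contraTneq sla => ->; rewrite mulr0 ltxx.
have s_la : 0 < s / la.
  rewrite (_ : s / la = s * la / la ^+ 2); last by field.
  by rewrite divr_gt0 // exprn_even_gt0.
exists la, (Num.sqrt (s / la)); split=> //; first by rewrite sqrtr_eq0 -ltNge.
by rewrite sqr_sqrtr ?ltW // divfK.
Qed.

Lemma rank_ge_pid m n p r (M : 'M[R]_(m, n)) (Q : 'M[R]_(n, p)) :
  (r <= m)%N -> (r <= p)%N -> M *m Q = pid_mx r -> (r <= \rank M)%N.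
Proof. by move=> rm rp MQ; have := mxrankM_maxl M Q; rewrite MQ rank_pid_mx. Qed.

Lemma eqmx_kermx_col m n (M : 'M[R]_(m, n)) (N : 'cV[R]_n) :
  M *m N = 0 -> (n - 1 <= \rank M)%N -> N != 0 -> (M == kermx N)%MS.
Proof.
move=> MN rM N0.
have rN : \rank N = 1%N.
  by apply/eqP; rewrite eqn_leq rank_leq_col lt0n mxrank_eq0 N0.
have sM : (M <= kermx N)%MS by rewrite sub_kermx MN.
rewrite -(mxrank_leqif_eq sM) mxrank_ker rN eqn_leq rM andbT.
by have := mxrankS sM; rewrite mxrank_ker rN.
Qed.

Lemma pid_mx2 : pid_mx 2 = M3 1 0 0 0 1 0 0 0 0.
Proof. by apply/matrixP => i j; rewrite !mxE; case_ord3 i; case_ord3 j. Qed.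

Lemma span2_X2X1 : (span2 (X2 R) (X1 R) == kermx (c3 0 0 1))%MS.
Proof.
rewrite X2E X1E span2E; apply: eqmx_kermx_col; last by rewrite c3_neq0 oner_neq0 !orbT.
  by rewrite mul_mx3_c3 -c3_0; congr c3; ring.
apply: (rank_ge_pid (Q := M3 0 1 0 1 0 0 0 0 0)) => //.
by rewrite pid_mx2 mul_mx3; congr mx3; ring.
Qed.

Lemma span2_X3X1 : (span2 (X3 R) (X1 R) == kermx (c3 0 1 0))%MS.
Proof.
rewrite X3E X1E span2E; apply: eqmx_kermx_col; last by rewrite c3_neq0 oner_neq0 !orbT.
  by rewrite mul_mx3_c3 -c3_0; congr c3; ring.
apply: (rank_ge_pid (Q := M3 0 1 0 0 0 0 1 0 0)) => //.
by rewrite pid_mx2 mul_mx3; congr mx3; ring.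
Qed.

Lemma span2_X2X3 : (span2 (X2 R) (X3 R) == kermx (c3 1 0 0))%MS.
Proof.
rewrite X2E X3E span2E; apply: eqmx_kermx_col; last by rewrite c3_neq0 oner_neq0.
  by rewrite mul_mx3_c3 -c3_0; congr c3; ring.
apply: (rank_ge_pid (Q := M3 0 0 0 1 0 0 0 1 0)) => //.
by rewrite pid_mx2 mul_mx3; congr mx3; ring.
Qed.

Lemma sol_aut_upper (p q al be : R) :
  al != 0 -> be != 0 -> sol_aut (M3 1 p q 0 al 0 0 0 be).
Proof.
move=> al0 be0; split.
  rewrite unitmxE unitfE det_mx3 (_ : _ + _ = al * be) ?mulf_neq0 //; ring.
move=> u v; rewrite [u]r3_eta [v]r3_eta !mul_r3_mx3 !sol_brE mul_r3_mx3.
by congr r3; ring.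
Qed.

Lemma sol_aut_swap (p q al be : R) :
  al != 0 -> be != 0 -> sol_aut (M3 (-1) p q 0 0 al 0 be 0).
Proof.
move=> al0 be0; split.
  rewrite unitmxE unitfE det_mx3 (_ : _ + _ = al * be) ?mulf_neq0 //; ring.
move=> u v; rewrite [u]r3_eta [v]r3_eta !mul_r3_mx3 !sol_brE mul_r3_mx3.
by congr r3; ring.
Qed.

Lemma kundt_equiv_kermx (H G H0 G0 A : 'M[R]_3) (N N0 : 'cV[R]_3) k :
  \rank H = 2%N -> H *m N = 0 -> (H0 == kermx N0)%MS -> N0 != 0 ->
  sol_aut A -> A *m N0 = k *: N -> A *m G0 *m A^T = G -> kundt_equiv H G H0 G0.
Proof.
move=> rH HN H0N0 N00 [Au Aaut] AN0 AG0; exists A; do !split => //.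
have HA : (H *m A == kermx N0)%MS.
  apply: eqmx_kermx_col; first by rewrite -mulmxA AN0 -scalemxAr HN scaler0.
    by rewrite mxrankMfree ?row_free_unit // rH.
  exact: N00.
exact/eqmxP/(eqmx_trans (eqmxP HA) (eqmx_sym (eqmxP H0N0))).
Qed.

Lemma lorentzian_det_lt0 (G : 'M[R]_3) : lorentzian G -> \det G < 0.
Proof.
move=> [_ [P [_ PGP]]].
have : \det G * \det P ^+ 2 = -1.
  have := congr1 determinant PGP; rewrite !det_mulmx det_tr det_diag.
  rewrite !big_ord_recr big_ord0 /= !mxE /= => detPGP.
  by transitivity (\det P * \det G * \det P); [ring | rewrite detPGP; ring].
by have := sqr_ge0 (\det P); nra.
Qed.

Lemma sym_mx3 (G : 'M[R]_3) : G^T = G ->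
  G = M3 (G 0 0) (G 0 1) (G 0 2) (G 0 1) (G 1 1) (G 1 2) (G 0 2) (G 1 2) (G 2 2).
Proof.
move=> /matrixP Gsym; have Gji i j : G j i = G i j by rewrite -[LHS]Gsym mxE.
by rewrite {1}[G]mx3_eta (Gji 0 1) (Gji 0 2) (Gji 1 2).
Qed.

Lemma sp_symE (G : 'M[R]_3) (u v : 'rV[R]_3) :
  G^T = G -> sp G u v = (v *m (G *m u^T)) 0 0.
Proof.
move=> Gsym; rewrite /sp -[u *m G *m v^T]trmxK [LHS]mxE.
by rewrite !trmx_mul trmxK Gsym.
Qed.

Lemma sol_brvv (u : 'rV[R]_3) : sol_br u u = 0.
Proof.
by rewrite /sol_br [u 0 1 * _]mulrC [u 0 2 * _]mulrC !subrr !scale0r subrr.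
Qed.

Lemma kundt_pair_normal (H G : 'M[R]_3) : kundt_pair H G ->
  exists u : 'rV[R]_3, let N := G *m u^T in
  [/\ N != 0, H *m N = 0, u *m N = 0,
      forall z, sol_br z u *m N = 0 &
      forall v w, v *m N = 0 -> w *m N = 0 -> sol_br v w *m N = 0].
Proof.
move=> [lorG [rankH [Hsub [u [uH [u_neq0 uperp]]] _ uu0]]]; have [Gsym _] := lorG.
exists u => N.
have GN v : memh H v -> v *m N = 0.
  by move=> /uperp; rewrite sp_symE // => vN; rewrite [v *m N]mx11_scalar vN raddf0.
have N0 : N != 0.
  have Gu : G \in unitmx by rewrite unitmxE unitfE ltr0_neq0 ?lorentzian_det_lt0.
  apply: contra u_neq0 => /eqP NE; rewrite -trmx_eq0 -(mulKmx Gu u^T).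
  by rewrite -/N NE mulmx0.
have HN : H *m N = 0.
  by apply/row_matrixP => i; rewrite row_mul row0 GN // /memh row_sub.
have memN v : memh H v <-> v *m N = 0.
  have HkerN : (H == kermx N)%MS by apply: eqmx_kermx_col; rewrite ?rankH.
  by rewrite /memh (eqmxP HkerN) sub_kermx; split=> /eqP.
split=> // [|z|v w /memN vH /memN wH]; [exact: GN | | exact/memN/Hsub].
have sp0 w : sp G 0 w = 0 by rewrite /sp !mul0mx mxE.
have := uu0 u uperp z; rewrite sol_brvv !sp0 mulr0 add0r /sp -mulmxA -/N.
move=> /esym/eqP; rewrite -mulr2n -mulr_natl mulf_eq0 pnatr_eq0 /= => /eqP zuN.
by rewrite [_ *m N]mx11_scalar zuN raddf0.
Qed.

Lemma br_orth_coords (u0 u1 u2 n0 n1 n2 : R) :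
  (forall z, sol_br z (r3 u0 u1 u2) *m c3 n0 n1 n2 = 0) ->
  [/\ u0 * n1 = 0, u0 * n2 = 0 & u1 * n1 = u2 * n2].
Proof.
move=> zuN.
have zN x y z : (x * u1 - y * u0) * n1 - (x * u2 - z * u0) * n2 = 0.
  have /eqP := zuN (r3 x y z); rewrite sol_brE mul_r3_c3_eq0 => /eqP <-; ring.
have := zN 1 0 0; have := zN 0 1 0; have := zN 0 0 1.
by split; lra.
Qed.

Lemma subalgebra_kermx_coords (n0 n1 n2 : R) :
  (forall v w, v *m c3 n0 n1 n2 = 0 -> w *m c3 n0 n1 n2 = 0 ->
     sol_br v w *m c3 n0 n1 n2 = 0) ->
  n1 * n2 = 0.
Proof.
move=> sub.
have vN : r3 n1 (- n0) 0 *m c3 n0 n1 n2 = 0.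
  by apply/eqP; rewrite mul_r3_c3_eq0; apply/eqP; ring.
have wN : r3 0 n2 (- n1) *m c3 n0 n1 n2 = 0.
  by apply/eqP; rewrite mul_r3_c3_eq0; apply/eqP; ring.
have /eqP := sub _ _ vN wN; rewrite sol_brE mul_r3_c3_eq0.
have -> : 0 * n0 + (n1 * n2 - - n0 * 0) * n1 + - (n1 * - n1 - 0 * 0) * n2
          = n1 * (n1 * n2) *+ 2 by ring.
rewrite mulrn_eq0 /= mulf_eq0 => /orP[/eqP-> | /eqP //]; exact: mul0r.
Qed.

Lemma null_normal_cases (u0 u1 u2 n0 n1 n2 : R) :
  u0 * n0 + u1 * n1 + u2 * n2 = 0 ->
  [/\ u0 * n1 = 0, u0 * n2 = 0 & u1 * n1 = u2 * n2] -> n1 * n2 = 0 ->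
  [|| n0 != 0, n1 != 0 | n2 != 0] ->
  u0 = 0 /\ [\/ n1 = 0 /\ n2 = 0, [/\ n1 = 0, n2 != 0 & u2 = 0]
              | [/\ n2 = 0, n1 != 0 & u1 = 0]].
Proof.
move=> un [u0n1 u0n2 u12] n12 n_neq0.
have [n1_0|n1_0] := eqVneq n1 0; have [n2_0|n2_0] := eqVneq n2 0.
- move: n_neq0 un; rewrite n1_0 n2_0 eqxx !orbF !mulr0 !addr0 => n0_0 /eqP.
  by rewrite mulf_eq0 (negbTE n0_0) orbF => /eqP u0_0; split=> //; apply: Or31.
- move/eqP: u0n2 u12; rewrite mulf_eq0 (negbTE n2_0) orbF n1_0 mulr0 => /eqP u0_0 /eqP.
  by rewrite eq_sym mulf_eq0 (negbTE n2_0) orbF => /eqP u2_0; split=> //; apply: Or32.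
- move/eqP: u0n1 u12; rewrite mulf_eq0 (negbTE n1_0) orbF n2_0 mulr0 => /eqP u0_0 /eqP.
  by rewrite mulf_eq0 (negbTE n1_0) orbF => /eqP u1_0; split=> //; apply: Or33.
- by move/eqP: n12; rewrite mulf_eq0 (negbTE n1_0) (negbTE n2_0).
Qed.

Definition kundt_model1 (lam : R) := M3 lam 0 0 0 0 (-1) 0 (-1) 0.
Definition kundt_model2 (lam : R) := M3 (lam ^+ 2) 0 0 0 lam 1 0 1 0.
Definition kundt_model3 (b : R) := M3 0 0 (- (2 / b)) 0 1 1 (- (2 / b)) 1 1.
Definition kundt_model4 := M3 0 0 1 0 1 0 1 0 0.

Definition kundt_classified (H G : 'M[R]_3) : Prop :=
  (exists lam : R, 0 < lam /\
     (kundt_equiv H G (span2 (X2 R) (X1 R)) (kundt_model1 lam) \/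
      kundt_equiv H G (span2 (X3 R) (X1 R)) (kundt_model1 lam)))
  \/ (exists lam : R, lam != 0 /\
     kundt_equiv H G (span2 (X3 R) (X1 R)) (kundt_model2 lam))
  \/ (exists b : R, 0 < b /\ kundt_equiv H G (span2 (X2 R) (X3 R)) (kundt_model3 b))
  \/ kundt_equiv H G (span2 (X2 R) (X3 R)) kundt_model4.

Section FixedHyperplane.
Variable H : 'M[R]_3.
Hypothesis rankH : \rank H = 2%N.

Lemma equiv_model4_upper (a b c al : R) : H *m c3 1 0 0 = 0 -> al != 0 -> c != 0 ->
  kundt_equiv H (M3 a b c b (al ^+ 2) 0 c 0 0) (span2 (X2 R) (X3 R)) kundt_model4.
Proof.
move=> HN al0 c0.
apply: (kundt_equiv_kermx (A := M3 1 (b / al) ((a - (b / al) ^+ 2) / 2) 0 al 0 0 0 c)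
  (k := 1) rankH HN span2_X2X3).
- by rewrite c3_neq0 oner_neq0.
- exact: sol_aut_upper.
- by rewrite mul_mx3_c3 scale_c3; congr c3; ring.
- by rewrite tr_mx3 !mul_mx3; congr mx3; field_nz.
Qed.

Lemma equiv_model4_swap (a b c be : R) : H *m c3 1 0 0 = 0 -> be != 0 -> b != 0 ->
  kundt_equiv H (M3 a b c b 0 0 c 0 (be ^+ 2)) (span2 (X2 R) (X3 R)) kundt_model4.
Proof.
move=> HN be0 b0.
apply: (kundt_equiv_kermx (A := M3 (-1) (c / be) (((c / be) ^+ 2 - a) / 2) 0 0 (- b) 0 be 0)
  (k := -1) rankH HN span2_X2X3).
- by rewrite c3_neq0 oner_neq0.
- by apply: sol_aut_swap; rewrite ?oppr_eq0.
- by rewrite mul_mx3_c3 scale_c3; congr c3; ring.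
- by rewrite tr_mx3 !mul_mx3; congr mx3; field_nz.
Qed.

Lemma equiv_model3 (a b c al r : R) : H *m c3 1 0 0 = 0 ->
  al != 0 -> r != 0 -> c + r * b != 0 ->
  kundt_equiv H
    (M3 a b c b (al ^+ 2) (- (al ^+ 2 * r)) c (- (al ^+ 2 * r)) (al ^+ 2 * r ^+ 2))
    (span2 (X2 R) (X3 R)) (kundt_model3 (2 * r * al / (c + r * b))).
Proof.
move=> HN al0 r0 cb0.
set s := 2 * r * al / (c + r * b).
have s0 : s != 0 by rewrite /s !mulf_neq0 ?invr_eq0 ?pnatr_eq0.
set q := s * ((b / al) ^+ 2 - a) / 4.
apply: (kundt_equiv_kermx (A := M3 1 (b / al - q) q 0 al 0 0 0 (- (r * al)))
  (k := 1) rankH HN span2_X2X3).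
- by rewrite c3_neq0 oner_neq0.
- by apply: sol_aut_upper; rewrite ?oppr_eq0 ?mulf_neq0.
- by rewrite mul_mx3_c3 scale_c3; congr c3; ring.
- by rewrite tr_mx3 !mul_mx3 /kundt_model3; congr mx3; rewrite /q /s; field_nz.
Qed.

Lemma equiv_model1_X2 (a b c e : R) : H *m c3 b 0 e = 0 -> e != 0 ->
  kundt_equiv H (M3 a b c b 0 e c e 0) (span2 (X2 R) (X1 R))
    (kundt_model1 (a - 2 * b * c / e)).
Proof.
move=> HN e0.
apply: (kundt_equiv_kermx (A := M3 1 (c / e) (- b) 0 1 0 0 0 (- e))
  (k := -1) rankH HN span2_X2X1).
- by rewrite c3_neq0 oner_neq0 !orbT.
- by apply: sol_aut_upper; rewrite ?oppr_eq0 ?oner_eq0.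
- by rewrite mul_mx3_c3 scale_c3; congr c3; ring.
- by rewrite tr_mx3 !mul_mx3; congr mx3; field_nz.
Qed.

Lemma equiv_model1_X3 (a b c e : R) : H *m c3 c e 0 = 0 -> e != 0 ->
  kundt_equiv H (M3 a b c b 0 e c e 0) (span2 (X3 R) (X1 R))
    (kundt_model1 (a - 2 * b * c / e)).
Proof.
move=> HN e0.
apply: (kundt_equiv_kermx (A := M3 1 (c / e) (- b) 0 1 0 0 0 (- e))
  (k := e^-1) rankH HN span2_X3X1).
- by rewrite c3_neq0 oner_neq0 !orbT.
- by apply: sol_aut_upper; rewrite ?oppr_eq0 ?oner_eq0.
- by rewrite mul_mx3_c3 scale_c3; congr c3; field_nz.
- by rewrite tr_mx3 !mul_mx3; congr mx3; field_nz.
Qed.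

Lemma equiv_model2_swap (a b c e la be : R) : H *m c3 b 0 e = 0 ->
  e != 0 -> la != 0 -> be != 0 ->
  a = la ^+ 2 - la * (b * be / e) ^+ 2 + 2 * b * c / e ->
  kundt_equiv H (M3 a b c b 0 e c e (be ^+ 2 * la)) (span2 (X3 R) (X1 R))
    (kundt_model2 la).
Proof.
move=> HN e0 la0 be0 ->.
set al := e / be; set p := b / al.
apply: (kundt_equiv_kermx (A := M3 (-1) p (c / be - p * la) 0 0 al 0 be 0)
  (k := be / e) rankH HN span2_X3X1).
- by rewrite c3_neq0 oner_neq0 !orbT.
- by apply: sol_aut_swap; rewrite // /al mulf_neq0 ?invr_eq0.
- by rewrite mul_mx3_c3 scale_c3; congr c3; rewrite /p /al; field_nz.
- by rewrite tr_mx3 !mul_mx3; congr mx3; rewrite /p /al; field_nz.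
Qed.

Lemma equiv_model2_upper (a b c e la al : R) : H *m c3 c e 0 = 0 ->
  e != 0 -> la != 0 -> al != 0 ->
  a = la ^+ 2 - la * (c * al / e) ^+ 2 + 2 * b * c / e ->
  kundt_equiv H (M3 a b c b (al ^+ 2 * la) e c e 0) (span2 (X3 R) (X1 R))
    (kundt_model2 la).
Proof.
move=> HN e0 la0 al0 ->.
set be := e / al; set p := c / be.
apply: (kundt_equiv_kermx (A := M3 1 p (b / al - p * la) 0 al 0 0 0 be)
  (k := al / e) rankH HN span2_X3X1).
- by rewrite c3_neq0 oner_neq0 !orbT.
- by apply: sol_aut_upper; rewrite // /be mulf_neq0 ?invr_eq0.
- by rewrite mul_mx3_c3 scale_c3; congr c3; rewrite /p /be; field_nz.
- by rewrite tr_mx3 !mul_mx3; congr mx3; rewrite /p /be; field_nz.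
Qed.

Lemma kundt_classified_span23 (a b c d e f : R) :
  \det (M3 a b c b d e c e f) < 0 -> d * f = e ^+ 2 -> H *m c3 1 0 0 = 0 ->
  kundt_classified H (M3 a b c b d e c e f).
Proof.
rewrite det_mx3 => detG dfe HN; right; right.
have [d0|d0] := eqVneq d 0.
  have e0 : e = 0 by apply/eqP; rewrite -sqrf_eq0 -dfe d0 mul0r.
  subst d e; have [f_gt0 b0] : 0 < f /\ b != 0 by apply: sqr_mul_gt0; lra.
  right; rewrite -[f](sqr_sqrtr (ltW f_gt0)).
  by apply: equiv_model4_swap; rewrite // sqrtr_eq0 -ltNge.
have [e0|e0] := eqVneq e 0.
  have f0 : f = 0 by move/eqP: dfe; rewrite e0 expr0n mulf_eq0 (negbTE d0) => /eqP.
  subst e f; have [d_gt0 c0] : 0 < d /\ c != 0 by apply: sqr_mul_gt0; lra.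
  right; rewrite -[d](sqr_sqrtr (ltW d_gt0)).
  by apply: equiv_model4_upper; rewrite // sqrtr_eq0 -ltNge.
set r := - (e / d).
have eE : e = - (d * r) by rewrite /r mulrN opprK mulrC divfK.
have fE : f = d * r ^+ 2.
  by apply: (mulfI d0); rewrite dfe eE /r; field_nz.
have r0 : r != 0 by rewrite oppr_eq0 mulf_neq0 ?invr_eq0.
clearbody r; subst e f.
have [d_gt0 cb0] : 0 < d /\ c + r * b != 0 by apply: sqr_mul_gt0; lra.
have [al [alK al_pos]] := exists_sqrt_sign d_gt0 (mulf_neq0 r0 (invr_neq0 cb0)).
have al0 : al != 0 by apply: contraTneq al_pos => ->; rewrite mulr0 ltxx.
left; exists (2 * r * al / (c + r * b)); split.
  rewrite (_ : _ / _ = 2 * (r / (c + r * b) * al)); last by field_nz.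
  by rewrite mulr_gt0.
by rewrite -alK; apply: equiv_model3.
Qed.

Lemma kundt_classified_X2_in_h (a b c e f : R) :
  \det (M3 a b c b 0 e c e f) < 0 -> e != 0 -> H *m c3 b 0 e = 0 ->
  kundt_classified H (M3 a b c b 0 e c e f).
Proof.
rewrite det_mx3 => detG e0 HN.
have [f0|f0] := eqVneq f 0.
  subst f; left; exists (a - 2 * b * c / e); split; last by left; exact: equiv_model1_X2.
  have [] // := @sqr_mul_gt0 e (a - 2 * b * c / e).
  by rewrite (_ : _ * _ = a * e ^+ 2 - 2 * b * c * e); [lra | field_nz].
pose K := a + b ^+ 2 * f / e ^+ 2 - 2 * b * c / e.
have [K_gt0 _] : 0 < K /\ e != 0.
  by apply: sqr_mul_gt0; rewrite (_ : _ * _ = a * e ^+ 2 + b ^+ 2 * f - 2 * b * c * e);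
    [lra | rewrite /K; field_nz].
have [la [be [laK la0 be0 bef]]] := exists_sqr_scale K_gt0 f0.
right; left; exists la; split=> //; rewrite -bef.
by apply: equiv_model2_swap => //; rewrite laK /K -bef; field_nz.
Qed.

Lemma kundt_classified_X3_in_h (a b c d e : R) :
  \det (M3 a b c b d e c e 0) < 0 -> e != 0 -> H *m c3 c e 0 = 0 ->
  kundt_classified H (M3 a b c b d e c e 0).
Proof.
rewrite det_mx3 => detG e0 HN.
have [d0|d0] := eqVneq d 0.
  subst d; left; exists (a - 2 * b * c / e); split; last by right; exact: equiv_model1_X3.
  have [] // := @sqr_mul_gt0 e (a - 2 * b * c / e).
  by rewrite (_ : _ * _ = a * e ^+ 2 - 2 * b * c * e); [lra | field_nz].
pose K := a + c ^+ 2 * d / e ^+ 2 - 2 * b * c / e.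
have [K_gt0 _] : 0 < K /\ e != 0.
  by apply: sqr_mul_gt0; rewrite (_ : _ * _ = a * e ^+ 2 + c ^+ 2 * d - 2 * b * c * e);
    [lra | rewrite /K; field_nz].
have [la [al [laK la0 al0 ald]]] := exists_sqr_scale K_gt0 d0.
right; left; exists la; split=> //; rewrite -ald.
by apply: equiv_model2_upper => //; rewrite laK /K -ald; field_nz.
Qed.

Lemma kundt_classified_coords (a b c d e f u0 u1 u2 : R) :
  let G := M3 a b c b d e c e f in let N := G *m (r3 u0 u1 u2)^T in
  \det G < 0 -> N != 0 -> H *m N = 0 -> r3 u0 u1 u2 *m N = 0 ->
  (forall z, sol_br z (r3 u0 u1 u2) *m N = 0) ->
  (forall v w, v *m N = 0 -> w *m N = 0 -> sol_br v w *m N = 0) ->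
  kundt_classified H G.
Proof.
move=> G N detG; rewrite /N tr_r3 mul_mx3_c3.
set n0 := a * u0 + _ + _; set n1 := b * u0 + _ + _; set n2 := c * u0 + _ + _.
move=> N0 HN /eqP; rewrite mul_r3_c3_eq0 => /eqP uN /br_orth_coords orth.
move=> /subalgebra_kermx_coords n12; rewrite c3_neq0 in N0.
have [u0_0 [[n1_0 n2_0] | [n1_0 n2_0 u2_0] | [n2_0 n1_0 u1_0]]] :=
  null_normal_cases uN orth n12 N0.
- have n0_0 : n0 != 0 by move: N0; rewrite n1_0 n2_0 eqxx !orbF.
  apply: kundt_classified_span23 => //.
    apply: (@sym2_singular_of_kernel _ _ _ u1 u2).
    + by rewrite -n1_0 /n1 u0_0; ring.
    + by rewrite -n2_0 /n2 u0_0; ring.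
    apply: contraNT n0_0; rewrite negb_or !negbK => /andP[/eqP u1_0 /eqP u2_0].
    by rewrite /n0 u0_0 u1_0 u2_0 !mulr0 !addr0.
  by apply: (mulmx_scale_col (k := n0)); rewrite // !mulr1 !mulr0 -HN n1_0 n2_0.
- have n2E : n2 = e * u1 by rewrite /n2 u0_0 u2_0; ring.
  have [u1_0 e0] : u1 != 0 /\ e != 0 by apply/andP; rewrite andbC -negb_or -mulf_eq0 -n2E.
  have d0 : d = 0 by apply: (mulIf u1_0); rewrite mul0r -n1_0 /n1 u0_0 u2_0; ring.
  move: detG; rewrite /G d0 => detG; apply: kundt_classified_X2_in_h => //.
  apply: (mulmx_scale_col (k := u1)) => //; rewrite -HN; congr (H *m c3 _ _ _).
  + by rewrite /n0 u0_0 u2_0; ring.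
  + by rewrite n1_0 mulr0.
  + by rewrite n2E mulrC.
- have n1E : n1 = e * u2 by rewrite /n1 u0_0 u1_0; ring.
  have [u2_0 e0] : u2 != 0 /\ e != 0 by apply/andP; rewrite andbC -negb_or -mulf_eq0 -n1E.
  have f0 : f = 0 by apply: (mulIf u2_0); rewrite mul0r -n2_0 /n2 u0_0 u1_0; ring.
  move: detG; rewrite /G f0 => detG; apply: kundt_classified_X3_in_h => //.
  apply: (mulmx_scale_col (k := u2)) => //; rewrite -HN; congr (H *m c3 _ _ _).
  + by rewrite /n0 u0_0 u1_0; ring.
  + by rewrite n1E mulrC.
  + by rewrite n2_0 mulr0.
Qed.

End FixedHyperplane.

End SolKundt.

Unset Implicit Arguments.
Set Strict Implicit.

Theorem theorem5p4 (R : realType) (H G : 'M[R]_3) :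
  kundt_pair H G ->
  (exists lam : R, 0 < lam /\
     (kundt_equiv H G (span2 (X2 R) (X1 R)) (mx3 lam 0 0 0 0 (-1) 0 (-1) 0) \/
      kundt_equiv H G (span2 (X3 R) (X1 R)) (mx3 lam 0 0 0 0 (-1) 0 (-1) 0)))
  \/ (exists lam : R, lam != 0 /\
     kundt_equiv H G (span2 (X3 R) (X1 R)) (mx3 (lam ^+ 2) 0 0 0 lam 1 0 1 0))
  \/ (exists b : R, 0 < b /\
     kundt_equiv H G (span2 (X2 R) (X3 R))
       (mx3 0 0 (- (2 / b)) 0 1 1 (- (2 / b)) 1 1))
  \/ kundt_equiv H G (span2 (X2 R) (X3 R)) (mx3 0 0 1 0 1 0 1 0 0).
Proof.
move=> KP; have [lorG [rankH _]] := KP; have [Gsym _] := lorG.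
have detG := lorentzian_det_lt0 lorG.
have [u [N0 HN uN uu0 sub]] := kundt_pair_normal KP.
move: detG N0 HN uN uu0 sub; rewrite (sym_mx3 Gsym) [u]r3_eta.
exact: (kundt_classified_coords rankH).
Qed.
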